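(* Let $\mathcal A$ be a weighted ODCA over $\mathbb F$ with initial configuration $c$, and let $\mathcal K=|C|\cdot|Q|$. The following are equivalent: (1) $\mathcal A$ is not regular (no finite-state weighted automaton over $\mathbb F$ recognises $f_{\mathcal A}$); (2) for every $t\in\mathbb N$ there exist configurations $d,e$ of $\mathcal A$ with $c\to^* d\to^* e$, $e=(x_e,p_e,n_e)$ with $n_e<\mathcal K$ and $x_e\notin W^{p_e,n_e}$, and $t<\mathrm{dist}(d)<\infty$; (3) there exist configurations $d=(x_d,p_d,n_d)$ and $e=(x_e,p_e,n_e)$ with $c\to^* d\to^* e$, $\mathcal K^2+\mathcal K\le n_d\le 2\mathcal K^2+\mathcal K$, $n_e<\mathcal K$ and $x_e\notin W^{p_e,n_e}$.
   Context: Fix a field $\mathbb{F}$ and a finite alphabet $\Sigma$. For $n\in\mathbb N$ let $\mathrm{sgn}(n)=0$ if $n=0$ and $1$ if $n>0$. A weighted ODCA is $\mathcal{A}=((C,\delta_0,\delta_1,p_0),(Q,\lambda,\Delta,\eta))$ where $C$ is a finite nonempty set of counter states, $\delta_0:C\times\Sigma\to C\times\{0,+1\}$ and $\delta_1:C\times\Sigma\to C\times\{-1,0,+1\}$ are deterministic counter transition functions, $p_0\in C$, $Q=\{q_1,\dots,q_{|Q|}\}$ is a finite nonempty set of states, $\lambda,\eta\in\mathbb{F}^{|Q|}$ are row vectors, and $\Delta:\Sigma\times\{0,1\}\to\mathbb{F}^{|Q|\times|Q|}$. A configuration is a triple $(x,p,n)\in\mathbb{F}^{|Q|}\times C\times\mathbb{N}$.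 Reading $a\in\Sigma$ from $(x,p,n)$ with $d=\mathrm{sgn}(n)$ and $\delta_d(p,a)=(p',e)$ leads to $(x\Delta(a,d),p',n+e)$. For each word $w$ and configuration $c=(x,p,n)$ there is a unique run on $w$ from $c$; if $M$ is the product of the matrices $\Delta(a,d)$ used along it, set $f_{\mathcal A}(w,c)=xM\eta^{T}$. The initial configuration is $(\lambda,p_0,0)$ and $f_{\mathcal A}(w)=f_{\mathcal A}(w,(\lambda,p_0,0))$. We write $c\to^* d$ if the run from $c$ on some word ends in $d$. The underlying uninitialised weighted automaton of $\mathcal A$ has state set $C\times Q$ (so $\mathcal K=|C||Q|$ states), transition matrices $\Delta'(a)$ with $\Delta'(a)[(p,q_i),(p',q_j)]=\Delta(a,1)[i][j]$ if $\delta_1(p,a)=(p',e)$ for some $e$, and $0$ otherwise, and final vector $\eta'[(p,q_i)]=\eta[i]$; for $y\in\mathbb F^{C\times Q}$ and $w=a_1\cdots a_t$ put $g(w,y)=y\Delta'(a_1)\cdots\Delta'(a_t)\eta'^T$. A configuration $c$ of $\mathcal A$ is $k$-equivalent to $y\in\mathbb F^{C\times Q}$ if $f_{\mathcal A}(w,c)=g(w,y)$ for all $w$ with $|w|\le k$. For $p\in C$, $m\in\mathbb N$, $W^{p,m}=\{x\in\mathbb F^{|Q|}:\exists y\in\mathbb F^{C\times Q},\ (x,p,m)\text{ is }\mathcal K\text{-equivalent to }y\}$. The distance $\mathrm{dist}(c)$ of a configuration $c$ is the minimal length of a word $w$ whose run from $c$ ends in some $(x,p,m)$ with $p\in C$,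 $m<\mathcal K$ and $x\notin W^{p,m}$ ($\infty$ if none exists). *)

From mathcomp Require Import all_boot all_order all_algebra.
Set Implicit Arguments. Unset Strict Implicit. Unset Printing Implicit Defensive.
Import GRing.Theory.
Local Open Scope ring_scope.

Inductive move := Mdec | Mstay | Minc.

Definition apply_move (m : move) (n : nat) : nat :=
  match m with Mdec => n.-1 | Mstay => n | Minc => n.+1 end.

(* A weighted ODCA over field F and alphabet S.
   Q = {q_1..q_nQ} is encoded by 'I_nQ; delta0's increment is a bool
   (false = 0, true = +1); Delta a false = Delta(a,0), Delta a true = Delta(a,1). *)
Unset Implicit Arguments.
Record wODCA (F : fieldType) (S : finType) := WODCA {
  cst : finType;
  delta0 : cst -> S -> cst * bool;
  delta1 : cst -> S -> cst * move;
  p0 : cst;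
  nQ : nat;
  lam : 'rV[F]_nQ;
  Delta : S -> bool -> 'M[F]_nQ;
  eta : 'rV[F]_nQ
}.
Arguments cst {F S}. Arguments delta0 {F S}. Arguments delta1 {F S}.
Arguments p0 {F S}. Arguments nQ {F S}. Arguments lam {F S}.
Arguments Delta {F S}. Arguments eta {F S}.
Set Implicit Arguments.

Section ODCA.
Variables (F : fieldType) (S : finType) (A : wODCA F S).

Definition config := ('rV[F]_(nQ A) * cst A * nat)%type.

Definition step (c : config) (a : S) : config :=
  let x := c.1.1 in let q := c.1.2 in let n := c.2 in
  if n == 0%N then
    ((x *m Delta A a false), (delta0 A q a).1, (n + (delta0 A q a).2)%N)
  else
    ((x *m Delta A a true), (delta1 A q a).1, apply_move (delta1 A q a).2 n).

Definition run (c : config) (w : seq S) : config := foldl step c w.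

Definition fconf (w : seq S) (c : config) : F :=
  (((run c w).1.1) *m (eta A)^T) ord0 ord0.

Definition init_config : config := (lam A, p0 A, 0%N).

Definition fA (w : seq S) : F := fconf w init_config.

Definition reach (c d : config) : Prop := exists w, run c w = d.

Definition regular : Prop :=
  exists (m : nat) (alpha : 'rV[F]_m) (mu : S -> 'M[F]_m) (beta : 'rV[F]_m),
    forall w : seq S,
      fA w = ((alpha *m foldl (fun M a => M *m mu a) 1%:M w) *m beta^T) ord0 ord0.

Definition ustate := (cst A * 'I_(nQ A))%type.

Definition Delta' (a : S) (s s' : ustate) : F :=
  if (delta1 A s.1 a).1 == s'.1 then Delta A a true s.2 s'.2 else 0.

Definition eta' (s : ustate) : F := eta A ord0 s.2.

Definition ustep (y : {ffun ustate -> F}) (a : S) : {ffun ustate -> F} :=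
  [ffun s' => \sum_(s : ustate) y s * Delta' a s s'].

Definition g (w : seq S) (y : {ffun ustate -> F}) : F :=
  \sum_(s : ustate) (foldl ustep y w) s * eta' s.

Definition bigK : nat := (#|{: cst A}| * nQ A)%N.

Definition kequiv (k : nat) (c : config) (y : {ffun ustate -> F}) : Prop :=
  forall w : seq S, (size w <= k)%N -> fconf w c = g w y.

Definition inW (p : cst A) (m : nat) (x : 'rV[F]_(nQ A)) : Prop :=
  exists y : {ffun ustate -> F}, kequiv bigK (x, p, m) y.

Definition bad (e : config) : Prop := (e.2 < bigK)%N /\ ~ inW e.1.2 e.2 e.1.1.

Definition is_dist (c : config) (k : nat) : Prop :=
  (exists w, size w = k /\ bad (run c w)) /\
  (forall w, bad (run c w) -> (k <= size w)%N).

End ODCA.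

From Pilot Require Import Defs.
From mathcomp Require Import all_boot all_order all_algebra.
From Stdlib Require Import Classical.
From mathcomp Require Import zify.
Set Implicit Arguments. Unset Strict Implicit. Unset Printing Implicit Defensive.
Import GRing.Theory.
Local Open Scope ring_scope.

(* Above level K the ODCA agrees with its underlying K-state automaton as long as no
   bad configuration is reachable, so if none is reachable from the configurations at
   some level T >= K, capping the counter at T gives a weighted automaton for f_A.
   Conversely, in a weighted automaton with m states the vectors from which no bad
   configuration is met within t steps form a decreasing chain of subspaces that
   stabilises by m, which bounds the distances of reachable configurations by m.
   For (3) => (2), a reachable configuration at level l together with a word leading
   from level l to a bad configuration is encoded as a rank-one matrix family indexed
   by C x C, whose diagonal trace is nonzero exactly when the two states match and the
   word detects badness. Wrapping a word climbing from 1 to 2 and one descending from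
   2 to 1 around a witness lifts it one level; this map is linear, so the spans of
   witnesses above level K + m decrease and stabilise by the dimension K^2. A witness
   with nonzero trace at level K^2 + K therefore forces witnesses with nonzero trace,
   i.e. bad configurations at distance > t, above every level K + t. *)

Section SubspacePredicates.
Variables (F : fieldType) (V : vectType F).

Definition subspace_pred (P : V -> Prop) :=
  [/\ P 0, forall u v, P u -> P v -> P (u + v) & forall k u, P u -> P (k *: u)].

Lemma vspace_of_pred (P : V -> Prop) :
  subspace_pred P -> exists U : {vspace V}, forall v, v \in U <-> P v.
Proof.
move=> [P0 PD PZ].
suff grow n (U : {vspace V}) : (forall v, v \in U -> P v) ->
    (\dim {:V} - \dim U <= n)%N -> exists U' : {vspace V}, forall v, v \in U' <-> P v.
  by apply: (grow _ 0%VS) => // v; rewrite memv0 => /eqP->.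
elim: n U => [|n IH] U sU codim.
  have /eqP UT : U == fullv.
    by rewrite -(dimv_leqif_eq (subvf U)).2; have := dimvS (subvf U); lia.
  by exists U => v; split=> [/sU //|_]; rewrite UT memvf.
have [allU|] := classic (forall v, P v -> v \in U).
  by exists U => v; split=> [/sU|/allU].
move=> /not_all_ex_not [v] /(imply_to_and (P v)) [Pv vU].
apply: (IH (U + <[v]>)%VS).
  by move=> _ /memv_addP [u uU [_ /vlineP [k ->] ->]]; apply: PD; [exact: sU | exact: PZ].
have ltU : (\dim U < \dim (U + <[v]>))%N.
  rewrite ltn_neqAle (dimvS (addvSl _ _)) andbT (dimv_leqif_eq (addvSl _ _)).2.
  apply: contra_notN vU => /eqP ->.
  by apply: subvP (addvSr U _) _ (memv_line v).
by have := dimvS (subvf (U + <[v]>)%VS); lia.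
Qed.

(* The dimension drops strictly until the first [t] with [P t = P t.+1], which must
   therefore occur by [\dim V]; from there on the chain is constant. *)
Lemma descending_chain_stable (P : nat -> V -> Prop) :
  (forall t, subspace_pred (P t)) ->
  (forall t v, P t.+1 v -> P t v) ->
  (forall t, (forall v, P t v -> P t.+1 v) -> forall v, P t.+1 v -> P t.+2 v) ->
  forall u, (\dim {:V} <= u)%N -> forall t v, P u v -> P t v.
Proof.
move=> Psub Pdec Pprop.
have Pmono a b v : (a <= b)%N -> P b v -> P a v.
  move=> /subnK <-; elim: (b - a)%N => //= k IH Pv; exact/IH/Pdec.
have Pstable s : (forall v, P s v -> P s.+1 v) -> forall k v, P s v -> P (s + k)%N v.
  move=> Ps; have Pstep k : forall v, P (s + k)%N v -> P (s + k).+1 v.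
    by elim: k => [|k IH]; [rewrite addn0 | rewrite addnS; exact: Pprop].
  by elim=> [|k IH] v; rewrite ?addn0 // addnS => /IH; apply: Pstep.
have [s sD Ps] : exists2 s, (s <= \dim {:V})%N & forall v, P s v -> P s.+1 v.
  apply: NNPP => nostab.
  suff dimP t : (t <= (\dim {:V}).+1)%N ->
      forall U : {vspace V}, (forall v, v \in U <-> P t v) -> (\dim U + t <= \dim {:V})%N.
    have [U PU] := vspace_of_pred (Psub (\dim {:V}).+1).
    by have := dimP _ (leqnn _) U PU; lia.
  elim: t => [_ U _|t IH tD U' PU']; first by rewrite addn0 dimvS ?subvf.
  have [U PU] := vspace_of_pred (Psub t).
  have sub : (U' <= U)%VS by apply/subvP => v /PU' /Pdec /PU.
  have : (\dim U' < \dim U)%N.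
    rewrite ltn_neqAle dimvS // andbT (dimv_leqif_eq sub).2.
    apply/negP => /eqP eqU; apply: nostab; exists t; first lia.
    by move=> v /PU; rewrite -eqU => /PU'.
  by have := IH (ltnW tD) U PU; lia.
move=> u Du t v Pu; have [tu|ut] := leqP t u; first exact: Pmono Pu.
have su : (s <= u)%N := leq_trans sD Du.
rewrite -(subnKC (leq_trans su (ltnW ut))); apply: Pstable => //.
exact: Pmono Pu.
Qed.

Definition span_pred (G : V -> Prop) (v : V) :=
  exists s : seq V, (forall x, x \in s -> G x) /\ v \in <<s>>%VS.

Lemma span_pred_subspace G : subspace_pred (span_pred G).
Proof.
split=> [|u v [s1 [G1 u1]] [s2 [G2 v2]]|k u [s [Gs us]]].
- by exists [::]; rewrite mem0v.
- exists (s1 ++ s2); rewrite span_cat memv_add //; split=> // x.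
  by rewrite mem_cat => /orP [/G1|/G2].
- by exists s; rewrite memvZ.
Qed.

Lemma span_pred_gen (G : V -> Prop) x : G x -> span_pred G x.
Proof. by exists [:: x]; rewrite memv_span1; split=> // y; rewrite inE => /eqP ->. Qed.

Lemma span_pred_ind (G X : V -> Prop) : subspace_pred X -> (forall x, G x -> X x) ->
  forall v, span_pred G v -> X v.
Proof.
move=> [X0 XD XZ] GX v [s []]; elim: s v => [|x s IH] v Gs.
  by rewrite span_nil memv0 => /eqP ->.
rewrite span_cons => /memv_addP [_ /vlineP [k ->] [t ts ->]].
apply: XD; first by apply/XZ/GX/Gs; rewrite inE eqxx.
by apply: IH ts => y ys; apply: Gs; rewrite inE ys orbT.
Qed.

Lemma span_pred_mono (G1 G2 : V -> Prop) : (forall x, G1 x -> G2 x) ->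
  forall v, span_pred G1 v -> span_pred G2 v.
Proof. by move=> G12 v [s [Gs vs]]; exists s; split=> // x /Gs /G12. Qed.

End SubspacePredicates.

Lemma subspace_pred_preim (F : fieldType) (V W : vectType F) (f : V -> W) (X : W -> Prop) :
  linear f -> subspace_pred X -> subspace_pred (fun v => X (f v)).
Proof.
move=> flin [X0 XD XZ]; have f0 : f 0 = 0.
  by rewrite -(subrr 0) (zmod_morphism_linear flin) subrr.
split=> [|u v Xu Xv|k u Xu]; first by rewrite f0.
  by rewrite -[u]scale1r flin scale1r; apply: XD.
by rewrite -[k *: u]addr0 flin f0 addr0; apply: XZ.
Qed.

Lemma separating_column (F : fieldType) (k : nat) (P : 'rV[F]_k -> Prop) (x : 'rV[F]_k) :
  subspace_pred P -> ~ P x -> exists chi : 'cV[F]_k,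
    (forall x', P x' -> (x' *m chi) 0 0 = 0) /\ (x *m chi) 0 0 != 0.
Proof.
move=> Psub nPx; have [U PU] := vspace_of_pred Psub.
pose M := 1%:M - lin1_mx (projv U).
have xM x' : x' *m M = x' - projv U x' by rewrite mulmxBr mulmx1 mul_rV_lin1.
have [j xMj] : exists j, (x *m M) 0 j != 0.
  apply: NNPP => allj; apply: nPx; apply/PU.
  suff /eqP: x *m M = 0 by rewrite xM subr_eq0 => /eqP ->; apply: memv_proj.
  apply/rowP => j; rewrite [RHS]mxE; apply/eqP; apply: contra_notT allj => nz.
  by exists j.
exists (M *m delta_mx j 0); split; last by rewrite mulmxA -colE mxE.
by move=> x' /PU Ux'; rewrite mulmxA -colE mxE xM projv_id // subrr mxE.
Qed.

Lemma ex_minimal (P : nat -> Prop) n : P n -> exists k, P k /\ forall j, P j -> (k <= j)%N.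
Proof.
elim: n {-2}n (leqnn n) => [|N IH] n nN Pn.
  by exists n; split=> // j _; move: nN; rewrite leqn0 => /eqP ->.
have [[j [jn Pj]]|nosmaller] := classic (exists j, (j < n)%N /\ P j).
  by apply: (IH j) => //; lia.
exists n; split=> // j Pj; rewrite leqNgt; apply/negP => jn.
by apply: nosmaller; exists j.
Qed.

Lemma sum_pair (R : nmodType) (T1 T2 : finType) (f : T1 * T2 -> R) :
  \sum_(s : T1 * T2) f s = \sum_(a : T1) \sum_(b : T2) f (a, b).
Proof. by rewrite pair_bigA; apply: eq_bigr => [[]]. Qed.

Section WeightedODCA.
Variables (F : fieldType) (S : finType) (A : wODCA F S).
Local Notation C := (cst A).
Local Notation n := (nQ A).
Local Notation step := (@step F S A).
Local Notation run := (@run F S A).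
Local Notation fconf := (@fconf F S A).
Local Notation ustep := (@ustep F S A).
Local Notation g := (@g F S A).
Local Notation US := (ustate A).
Local Notation K := (bigK A).
Local Notation inW := (@inW F S A).
Local Notation bad := (@bad F S A).
Local Notation reach := (@reach F S A).
Local Notation kequiv := (@kequiv F S A).
Local Notation uvec := {ffun US -> F^o}.

Definition cstep (pn : C * nat) (a : S) : C * nat :=
  if pn.2 == 0%N then ((delta0 A pn.1 a).1, (pn.2 + (delta0 A pn.1 a).2)%N)
  else ((delta1 A pn.1 a).1, apply_move (delta1 A pn.1 a).2 pn.2).

Definition crun (pn : C * nat) (w : seq S) := foldl cstep pn w.

Fixpoint run_mx (pn : C * nat) (w : seq S) : 'M[F]_n :=
  if w is a :: w' then Delta A a (pn.2 != 0%N) *m run_mx (cstep pn a) w' else 1%:M.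

Lemma stepE x p m a : step (x, p, m) a =
  (x *m Delta A a (m != 0%N), (cstep (p, m) a).1, (cstep (p, m) a).2).
Proof. by rewrite /step /cstep /=; case: (m == 0%N). Qed.

Lemma runE w x p m : run (x, p, m) w =
  (x *m run_mx (p, m) w, (crun (p, m) w).1, (crun (p, m) w).2).
Proof.
elim: w x p m => [|a w IH] x p m /=; first by rewrite mulmx1.
by rewrite /run /= stepE -/(run _ w) IH mulmxA /crun /=; case: (cstep (p, m) a).
Qed.

Lemma run_cat c u v : run c (u ++ v) = run (run c u) v.
Proof. exact: foldl_cat. Qed.

Lemma crun_cat pn u v : crun pn (u ++ v) = crun (crun pn u) v.
Proof. exact: foldl_cat. Qed.

Lemma run_mx_cat pn u v : run_mx pn (u ++ v) = run_mx pn u *m run_mx (crun pn u) v.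
Proof. by elim: u pn => [|a u IH] pn /=; rewrite ?mul1mx // IH mulmxA. Qed.

Lemma cstep_ge pn a : (pn.2 <= (cstep pn a).2 + 1)%N.
Proof. by rewrite /cstep; case: eqP => [->|_] //=; case: (delta1 A pn.1 a).2 => /=; lia. Qed.

Lemma cstep_le pn a : ((cstep pn a).2 <= pn.2 + 1)%N.
Proof.
rewrite /cstep; case: eqP => [->|_] /=; first by case: (delta0 A pn.1 a).2.
by case: (delta1 A pn.1 a).2 => /=; lia.
Qed.

Lemma crun_ge pn w : (pn.2 <= size w + (crun pn w).2)%N.
Proof.
elim: w pn => [|a w IH] pn //=.
by have := cstep_ge pn a; have := IH (cstep pn a); rewrite /crun /=; lia.
Qed.

Fixpoint stays_ge (k : nat) (pn : C * nat) (w : seq S) : bool :=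
  if w is a :: w' then (k <= pn.2)%N && stays_ge k (cstep pn a) w' else true.

Lemma stays_ge_mono k k' pn w : (k' <= k)%N -> stays_ge k pn w -> stays_ge k' pn w.
Proof.
move=> kk; elim: w pn => [|a w IH] pn //= /andP [km ?].
by rewrite (leq_trans kk km) IH.
Qed.

Lemma stays_ge_rcons k pn w a :
  stays_ge k pn (rcons w a) = stays_ge k pn w && (k <= (crun pn w).2)%N.
Proof. by elim: w pn => [|b w IH] pn /=; rewrite ?andbT // IH andbA. Qed.

(* As long as the counter stays positive the zero test never fires, so the
   run is invariant under shifting the counter. *)
Lemma stays_ge_shift w k p m d : (1 <= k)%N ->
  (stays_ge (k + d) (p, m + d)%N w = stays_ge k (p, m) w) /\
  (stays_ge k (p, m) w -> run_mx (p, m + d)%N w = run_mx (p, m) w /\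
     crun (p, m + d)%N w = ((crun (p, m) w).1, ((crun (p, m) w).2 + d)%N)).
Proof.
move=> k1; elim: w p m => [|a w IH] p m //=.
rewrite leq_add2r; case: (leqP k m) => km //=.
have m0 : m != 0%N by rewrite -lt0n (leq_trans k1 km).
have md0 : (m + d != 0)%N by rewrite addn_eq0 negb_and m0.
have cs : cstep (p, (m + d)%N) a = ((cstep (p, m) a).1, ((cstep (p, m) a).2 + d)%N).
  rewrite /cstep /= (negbTE m0) (negbTE md0) /=.
  by case: (delta1 A p a).2 => /=; congr (_, _); lia.
have [IH1 IH2] := IH (cstep (p, m) a).1 (cstep (p, m) a).2.
rewrite -surjective_pairing in IH1 IH2.
rewrite cs IH1; split=> // /IH2 [-> e2].
by rewrite m0 md0 e2.
Qed.

Lemma stays_ge_shift_down k p m l w : (1 <= k)%N -> (m <= l)%N ->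
  stays_ge (k + (l - m)) (p, l) w -> stays_ge k (p, m) w.
Proof. by move=> k1 ml; have [<- _] := stays_ge_shift w p m (l - m) k1; rewrite subnKC. Qed.

Lemma run_shift_up k p m l w : (1 <= k)%N -> (m <= l)%N -> stays_ge k (p, m) w ->
  run_mx (p, l) w = run_mx (p, m) w /\
  crun (p, l) w = ((crun (p, m) w).1, ((crun (p, m) w).2 + (l - m))%N).
Proof. by move=> k1 ml; have [_] := stays_ge_shift w p m (l - m) k1; rewrite subnKC. Qed.

Lemma ascent_split l u pn : (pn.2 <= l <= (crun pn u).2)%N ->
  exists u1 u2, [/\ u = u1 ++ u2, (crun pn u1).2 = l & stays_ge l (crun pn u1) u2].
Proof.
elim/last_ind: u => [|u a IH] /andP [pl lu].
  by exists [::], [::]; split=> //; apply/eqP; rewrite eqn_leq pl.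
have [e|ne] := eqVneq l (crun pn (rcons u a)).2.
  by exists (rcons u a), [::]; rewrite cats0.
have lu' : (l <= (crun pn u).2)%N.
  have := cstep_le (crun pn u) a.
  by rewrite /crun -cats1 foldl_cat /= in lu ne *; lia.
have [u1 [u2 [eu e2 e3]]] := IH (introT andP (conj pl lu')).
exists u1, (rcons u2 a); split=> //; first by rewrite eu rcons_cat.
by rewrite stays_ge_rcons e3 -crun_cat -eu.
Qed.

Lemma descent_split l w pn : ((crun pn w).2 <= l <= pn.2)%N ->
  exists v w', [/\ w = v ++ w', (crun pn v).2 = l & stays_ge l.+1 pn v].
Proof.
elim: w pn => [|a w IH] pn /andP [wl lp].
  by exists [::], [::]; split=> //; rewrite /crun /= in wl *; lia.
have [e|ne] := eqVneq pn.2 l; first by exists [::], (a :: w).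
have /IH [v [w' [-> e2 e3]]] : ((crun (cstep pn a) w).2 <= l <= (cstep pn a).2)%N.
  by have := cstep_ge pn a; rewrite wl; lia.
by exists (a :: v), w'; split=> //=; rewrite e3 andbT; lia.
Qed.

Lemma fconfE w x p m : fconf w (x, p, m) = (x *m run_mx (p, m) w *m (eta A)^T) 0 0.
Proof. by rewrite /Defs.fconf runE. Qed.

Lemma ustep_linear a k (y z : uvec) :
  ustep (k *: y + z) a = k *: (ustep y a : uvec) + ustep z a.
Proof.
apply/ffunP=> s'; rewrite !ffunE scaler_sumr -big_split; apply: eq_bigr => s _.
by rewrite !ffunE mulrDl scalerAl.
Qed.

Lemma g_linear w k (y z : uvec) : g w (k *: y + z) = k * g w y + g w z.
Proof.
have foldlE : foldl ustep (k *: y + z) w = k *: (foldl ustep y w : uvec) + foldl ustep z w.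
  by elim: w y z => [|a w IH] y z //=; rewrite ustep_linear IH.
rewrite /Defs.g foldlE mulr_sumr -big_split; apply: eq_bigr => s _.
by rewrite !ffunE mulrDl mulrA.
Qed.

Lemma g0 w : g w 0 = 0.
Proof.
have e := g_linear w 1 0 0; rewrite scale1r addr0 mul1r in e.
by apply: (addrI (g w 0)); rewrite -e addr0.
Qed.

Definition uvec_of (x : 'rV[F]_n) (p : C) : uvec :=
  [ffun s => if s.1 == p then x 0 s.2 else 0].

Lemma ustep_uvec_of x p a :
  ustep (uvec_of x p) a = uvec_of (x *m Delta A a true) (delta1 A p a).1.
Proof.
apply/ffunP=> s'; rewrite !ffunE sum_pair (bigD1 p) //= [X in _ + X]big1 ?addr0; last first.
  by move=> p' /negbTE p'p; apply: big1 => i _; rewrite ffunE /= p'p mul0r.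
rewrite /Delta' /= eq_sym; case: eqP => [_|_]; last by rewrite big1 // => i _; rewrite mulr0.
by rewrite mxE; apply: eq_bigr => i _; rewrite ffunE /= eqxx.
Qed.

Lemma g_nil_uvec_of x p : g [::] (uvec_of x p) = (x *m (eta A)^T) 0 0.
Proof.
rewrite /Defs.g mxE sum_pair (bigD1 p) //= [X in _ + X]big1 ?addr0; last first.
  by move=> p' /negbTE p'p; apply: big1 => i _; rewrite ffunE /= p'p mul0r.
by apply: eq_bigr => i _; rewrite ffunE /= eqxx mxE.
Qed.

(* While the counter cannot reach zero, the ODCA is simulated by its underlying automaton. *)
Lemma fconf_uvec_of w x p m : (size w <= m)%N -> fconf w (x, p, m) = g w (uvec_of x p).
Proof.
elim: w x p m => [|a w IH] x p m wm; first by rewrite g_nil_uvec_of.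
have m0 : m != 0%N by rewrite -lt0n (leq_trans _ wm).
rewrite /Defs.g /= -/(g w _) ustep_uvec_of /Defs.fconf /run /= -/(run _ w) -/(fconf w _).
rewrite stepE m0 /cstep /= (negbTE m0) /=; apply: IH => /=.
by move: wm m0; case: (delta1 A p a).2 => /=; lia.
Qed.

Lemma inW_subspace p m : subspace_pred (inW p m).
Proof.
split=> [|x1 x2 [y1 e1] [y2 e2]|k x [y e]].
- by exists 0 => w _; rewrite fconfE g0 !mul0mx mxE.
- exists (1 *: (y1 : uvec) + y2) => w wK.
  by rewrite g_linear mul1r -e1 // -e2 // !fconfE !mulmxDl mxE.
- exists (k *: (y : uvec) + 0) => w wK.
  by rewrite g_linear g0 addr0 -e // !fconfE -!scalemxAl mxE.
Qed.

Lemma dim_uvec : \dim {: uvec} = K.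
Proof. by rewrite dimvf /dim /= card_prod card_ord muln1. Qed.

Lemma g_eq_of_short_words (z1 z2 : uvec) :
  (forall v, (size v < K)%N -> g v z1 = g v z2) -> forall v, g v z1 = g v z2.
Proof.
move=> short v.
pose P t (z : uvec) := forall v, (size v < t)%N -> g v z = 0.
have Psub t : subspace_pred (P t).
  split=> [u _|a b Pa Pb u ut|k a Pa u ut]; first exact: g0.
  - by rewrite -[a]scale1r g_linear mul1r Pa // Pb // addr0.
  - by rewrite -[k *: a]addr0 g_linear g0 Pa // mulr0 addr0.
have Pdec t z : P t.+1 z -> P t z by move=> Pz u ut; apply: Pz; lia.
have Pprop t : (forall z, P t z -> P t.+1 z) -> forall z, P t.+1 z -> P t.+2 z.
  move=> Pt z Pz [|a u] ut; first exact: Pz.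
  by apply: (Pt (ustep z a)) => // u' u't; apply: (Pz (a :: u')).
have gB u : g u (z1 - z2) = g u z1 - g u z2.
  by rewrite -scaleN1r addrC g_linear mulN1r addrC.
have PK : P K (z1 - z2) by move=> u uK; rewrite gB short // subrr.
have := descending_chain_stable Psub Pdec Pprop (eq_leq dim_uvec) (size v).+1 PK.
by move=> /(_ v (ltnSn _)) /eqP; rewrite gB subr_eq0 => /eqP.
Qed.

Lemma reach_step c d a : reach c d -> reach c (step d a).
Proof. by move=> [u <-]; exists (rcons u a); rewrite -cats1 run_cat. Qed.

Section NoBadConfiguration.
Variable d : config A.
Hypothesis no_bad : forall w, ~ bad (run d w).

Lemma kequiv_of_no_bad c : reach d c -> exists y, kequiv K c y.
Proof.
move=> [u <-]; have := no_bad (w := u); case: (run d u) => [[x p] m] /= nbad.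
have [Km|mK] := leqP K m.
  by exists (uvec_of x p) => w wK; apply: fconf_uvec_of; apply: leq_trans Km.
by apply: NNPP => noy; apply: nbad; split=> // -[y ?]; apply: noy; exists y.
Qed.

(* Induction on [w], choosing a new K-equivalent vector after each letter; the
   choices agree on all words by [g_eq_of_short_words]. *)
Lemma fconf_g_of_no_bad c y : reach d c -> kequiv K c y -> forall w, fconf w c = g w y.
Proof.
move=> + + w; elim: w c y => [|a w IH] c y dc cy; first exact: cy.
have [y' c'y'] := kequiv_of_no_bad (reach_step a dc).
rewrite [LHS]/Defs.fconf /run /= -/(run _ w) -/(fconf w _) (IH _ _ (reach_step a dc) c'y').
apply: g_eq_of_short_words => v vK.
by rewrite -c'y' 1?ltnW // -[fconf v _]/(fconf (a :: v) c) cy.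
Qed.

End NoBadConfiguration.

Lemma fconf_uvec_of_no_bad x p m : (K <= m)%N -> (forall w, ~ bad (run (x, p, m) w)) ->
  forall w, fconf w (x, p, m) = g w (uvec_of x p).
Proof.
move=> Km no_bad; apply: fconf_g_of_no_bad => //; first by exists [::].
by move=> w wK; apply: fconf_uvec_of; apply: leq_trans Km.
Qed.

Definition ffstep (St : finType) (mu : S -> St -> St -> F) (v : {ffun St -> F}) (a : S) :
  {ffun St -> F} := [ffun s' => \sum_s v s * mu a s s'].

Lemma regular_of_ffun_automaton (St : finType) (al : {ffun St -> F})
    (mu : S -> St -> St -> F) (be : St -> F) :
  (forall w, fA A w = \sum_s (foldl (ffstep mu) al w) s * be s) -> regular A.
Proof.
move=> fAE; pose mxmu a : 'M[F]_#|St| := \matrix_(i, j) mu a (enum_val i) (enum_val j).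
exists #|St|, (\row_i al (enum_val i)), mxmu, (\row_i be (enum_val i)) => w.
have foldlE : \row_i al (enum_val i) *m foldl (fun M a => M *m mxmu a) 1%:M w =
    \row_i (foldl (ffstep mu) al w) (enum_val i).
  elim/last_ind: w => [|w a IH]; first by rewrite /= mulmx1.
  rewrite !foldl_rcons mulmxA IH; apply/rowP=> j; rewrite !mxE ffunE.
  by rewrite (big_enum_val (A := St)); apply: eq_bigr => i _; rewrite !mxE.
rewrite fAE foldlE mxE (big_enum_val (A := St)).
by apply: eq_bigr => i _; rewrite !mxE.
Qed.

Section Truncation.
Variable T : nat.
Hypotheses (KT : (K <= T)%N) (T_gt0 : (0 < T)%N).

Local Notation tstate := ((C * 'I_T.+1) * 'I_n)%type.

(* The ODCA with its counter capped at [T]: at level [T] it runs as its underlying automaton. *)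

Definition tmu (a : S) (s s' : tstate) : F :=
  if (val s.1.2 < T)%N then
    if cstep (s.1.1, val s.1.2) a == (s'.1.1, val s'.1.2)
    then Delta A a (val s.1.2 != 0%N) s.2 s'.2 else 0
  else if (val s'.1.2 == T) && ((delta1 A s.1.1 a).1 == s'.1.1)
       then Delta A a true s.2 s'.2 else 0.

Definition tvec_of_config (c : config A) : {ffun tstate -> F} :=
  [ffun s => if (s.1.1 == c.1.2) && (val s.1.2 == c.2) then c.1.1 0 s.2 else 0].

Definition tvec_of_uvec (y : {ffun US -> F}) : {ffun tstate -> F} :=
  [ffun s => if val s.1.2 == T then y (s.1.1, s.2) else 0].

Definition tfinal (s : tstate) : F := eta A 0 s.2.

Lemma sum_tstate (f : tstate -> F) :
  \sum_s f s = \sum_(p : C) \sum_(l : 'I_T.+1) \sum_(i : 'I_n) f ((p, l), i).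
Proof. by rewrite !sum_pair. Qed.

Lemma tstep_config x p m a : (m < T)%N ->
  ffstep tmu (tvec_of_config (x, p, m)) a = tvec_of_config (step (x, p, m) a).
Proof.
move=> mT; have mT1 : (m < T.+1)%N by apply: ltnW.
apply/ffunP=> s'; rewrite !ffunE sum_pair (bigD1 (p, inord m)) //= [X in _ + X]big1 ?addr0.
  under eq_bigr => i _ do rewrite ffunE /= eqxx inordK // eqxx /= /tmu /= inordK // mT.
  rewrite stepE /=; case: (cstep (p, m) a) => [p' m'] /=.
  rewrite xpair_eqE [p' == _]eq_sym [m' == _]eq_sym.
  by case: ifP => _; rewrite ?mxE // big1 // => i _; rewrite mulr0.
move=> [p1 l] /= pl; apply: big1 => i _; rewrite ffunE /=.
case: andP => [[/eqP e1 /eqP e2]|_]; last by rewrite mul0r.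
by move: pl; rewrite e1 -e2 inord_val eqxx.
Qed.

Lemma sum_tstate_top (f : tstate -> F) (y : {ffun US -> F}) :
  \sum_s tvec_of_uvec y s * f s = \sum_(s : US) y s * f ((s.1, ord_max), s.2).
Proof.
rewrite sum_tstate sum_pair; apply: eq_bigr => p _.
rewrite (bigD1 ord_max) //= [X in _ + X]big1 ?addr0.
  by apply: eq_bigr => i _; rewrite ffunE /= eqxx.
move=> l lmax; apply: big1 => i _; rewrite ffunE /=; case: eqP => [lT|_]; last by rewrite mul0r.
by move: lmax; rewrite (_ : l = ord_max) ?eqxx //; apply: val_inj.
Qed.

Lemma tstep_uvec y a : ffstep tmu (tvec_of_uvec y) a = tvec_of_uvec (ustep y a).
Proof.
apply/ffunP=> s'; rewrite !ffunE sum_tstate_top /tmu /= ltnn.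
case: eqP => [_|_] /=; last by apply: big1 => s _; rewrite mulr0.
by apply: eq_bigr => s _; rewrite /Delta' eq_sym.
Qed.

Lemma tvec_of_config_top x p : tvec_of_config (x, p, T) = tvec_of_uvec (uvec_of x p).
Proof. by apply/ffunP=> s; rewrite !ffunE /=; case: (val s.1.2 == T); rewrite ?andbT ?andbF. Qed.

Lemma tout_config x p m : (m <= T)%N ->
  \sum_s tvec_of_config (x, p, m) s * tfinal s = fconf [::] (x, p, m).
Proof.
move=> mT; rewrite sum_tstate (bigD1 p) //= [X in _ + X]big1 ?addr0; last first.
  move=> p1 /negbTE p1p; apply: big1 => l _; apply: big1 => i _.
  by rewrite ffunE /= p1p mul0r.
rewrite (bigD1 (inord m)) //= [X in _ + X]big1 ?addr0; last first.
  move=> l lm; apply: big1 => i _; rewrite ffunE /= eqxx /=.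
  case: eqP => [e|_]; last by rewrite mul0r.
  by move: lm; rewrite -e inord_val eqxx.
rewrite /Defs.fconf /= mxE; apply: eq_bigr => i _.
by rewrite ffunE /= eqxx inordK ?ltnS // eqxx /tfinal mxE.
Qed.

Lemma tout_uvec y : \sum_s tvec_of_uvec y s * tfinal s = g [::] y.
Proof. by rewrite sum_tstate_top. Qed.

Lemma tfoldl_init w :
  let c := init_config A in
  ((run c w).2 < T)%N /\ foldl (ffstep tmu) (tvec_of_config c) w = tvec_of_config (run c w) \/
  (exists u u', [/\ w = u ++ u', (run c u).2 = T &
     foldl (ffstep tmu) (tvec_of_config c) w =
     tvec_of_uvec (foldl ustep (uvec_of (run c u).1.1 (run c u).1.2) u')]).
Proof.
move=> c; elim/last_ind: w => [|w a IH]; first by left.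
rewrite foldl_rcons -cats1 run_cat /=.
case: IH => [[wT ->]|[u [u' [-> uT ->]]]]; last first.
  by right; exists u, (rcons u' a); rewrite tstep_uvec foldl_rcons -cats1 catA.
move: wT; case E: (run c w) => [[x p] m] /= mT; rewrite tstep_config //.
have := cstep_le (p, m) a; rewrite stepE /=; case: ltnP => [|Tm] ub; first by left.
right; exists (rcons w a), [::]; rewrite cats0 -cats1 run_cat E /= stepE /=.
have -> : (cstep (p, m) a).2 = T by lia.
by rewrite tvec_of_config_top.
Qed.

Hypothesis no_bad_at_T :
  forall d, reach (init_config A) d -> d.2 = T -> forall w, ~ bad (run d w).

Lemma regular_of_no_bad_at : regular A.
Proof.
apply: (@regular_of_ffun_automaton _ (tvec_of_config (init_config A)) tmu tfinal) => w.
have [[wT ->]|[u [u' [-> uT ->]]]] := tfoldl_init w.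
  by rewrite /fA /Defs.fconf; case: (run _ w) wT => [[x p] m] /= wT; rewrite tout_config 1?ltnW.
rewrite tout_uvec -/(g u' _) /fA /Defs.fconf run_cat -/(fconf u' _).
case E: (run _ u) uT => [[x p] m] /= mT; subst m.
rewrite fconf_uvec_of_no_bad //; apply: no_bad_at_T => //.
by exists u.
Qed.

End Truncation.

Section RegularBoundedDistance.
Variables (m : nat) (alpha : 'rV[F]_m) (mu : S -> 'M[F]_m) (beta : 'rV[F]_m).
Hypothesis fA_mx : forall w,
  fA A w = ((alpha *m foldl (fun M a => M *m mu a) 1%:M w) *m beta^T) ord0 ord0.

Definition mu_word (w : seq S) : 'M[F]_m := foldl (fun M a => M *m mu a) 1%:M w.

Lemma mu_word_cat u v : mu_word (u ++ v) = mu_word u *m mu_word v.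
Proof.
rewrite /mu_word foldl_cat; move: (foldl _ 1%:M u) => M.
by elim/last_ind: v => [|v a IH]; rewrite ?mulmx1 // !foldl_rcons IH mulmxA.
Qed.

Definition fvec (z : 'rV[F]_m) (v : seq S) : F := (z *m mu_word v *m beta^T) ord0 ord0.

Lemma fconf_run_init u v : fconf v (run (init_config A) u) = fvec (alpha *m mu_word u) v.
Proof.
by rewrite /fvec -[alpha *m _ *m mu_word v]mulmxA -mu_word_cat -fA_mx /fA /Defs.fconf run_cat.
Qed.

Definition kequiv_vec (z : 'rV[F]_m) :=
  exists y : uvec, forall v, (size v <= K)%N -> fvec z v = g v y.

Lemma kequiv_vec_subspace : subspace_pred kequiv_vec.
Proof.
split=> [|z1 z2 [y1 e1] [y2 e2]|k z [y e]].
- by exists 0 => v _; rewrite g0 /fvec !mul0mx mxE.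
- exists (1 *: y1 + y2) => v vK.
  by rewrite g_linear mul1r -e1 // -e2 // /fvec !mulmxDl mxE.
- exists (k *: y + 0) => v vK.
  by rewrite g_linear g0 addr0 -e // /fvec -!scalemxAl mxE.
Qed.

Lemma kequiv_vec_run_init u :
  kequiv_vec (alpha *m mu_word u) <-> ~ bad (run (init_config A) u).
Proof.
have eqv x p n y : run (init_config A) u = (x, p, n) ->
    kequiv K (x, p, n) y <-> forall v, (size v <= K)%N -> fvec (alpha *m mu_word u) v = g v y.
  by move=> E; split=> e v /e; rewrite -fconf_run_init E.
case E: (run _ u) => [[x p] n]; split.
  by move=> [y /(eqv _ _ _ y E) e] [_ /= []]; exists y.
move=> nbad; have [Kn|nK] := leqP K n.
  exists (uvec_of x p); apply/(eqv _ _ _ _ E) => w wK.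
  by apply: fconf_uvec_of; apply: leq_trans Kn.
have [y /(eqv _ _ _ y E) e] : inW p n x by apply: NNPP => nW; apply: nbad.
by exists y.
Qed.

(* The vectors [z] of the finite automaton from which no bad configuration is met
   within [t] steps form a chain of subspaces of ['rV_m]; it stabilises by [m]. *)
Lemma dist_le_dim d k : reach (init_config A) d -> is_dist d k -> (k <= m)%N.
Proof.
move=> [u <-] [[w [<- wbad]] wmin]; rewrite leqNgt; apply/negP => mw.
pose P t z := forall v, (size v < t)%N -> kequiv_vec (z *m mu_word v).
have Psub t : subspace_pred (P t).
  have [K0 KD KZ] := kequiv_vec_subspace.
  split=> [v _|z1 z2 P1 P2 v vt|c z Pz v vt]; first by rewrite mul0mx.
    by rewrite mulmxDl; apply: KD; [apply: P1 | apply: P2].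
  by rewrite -scalemxAl; apply/KZ/Pz.
have Pdec t z : P t.+1 z -> P t z by move=> Pz v vt; apply: Pz; lia.
have Pprop t : (forall z, P t z -> P t.+1 z) -> forall z, P t.+1 z -> P t.+2 z.
  have mu_cons a v : mu_word (a :: v) = mu a *m mu_word v.
    by rewrite -cat1s mu_word_cat /mu_word /= mul1mx.
  move=> Pt z Pz [|a v] vt; first exact: Pz.
  rewrite mu_cons mulmxA; apply: (Pt (z *m mu a)) => // v' v't.
  by have := Pz (a :: v') v't; rewrite mu_cons mulmxA.
have Pm : P m (alpha *m mu_word u).
  move=> v vm; rewrite -mulmxA -mu_word_cat; apply/kequiv_vec_run_init.
  by rewrite run_cat => /wmin; lia.
have dimm : (\dim {:'rV[F]_m} <= m)%N by rewrite dimvf dim_matrix; lia.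
move: (descending_chain_stable Psub Pdec Pprop dimm (size w).+1 Pm w (ltnSn _)).
by rewrite -mulmxA -mu_word_cat => /kequiv_vec_run_init; rewrite run_cat.
Qed.

End RegularBoundedDistance.

Lemma dist_bounded_of_regular : regular A ->
  exists T, forall d k, reach (init_config A) d -> is_dist d k -> (k <= T)%N.
Proof.
by move=> [m [alpha [mu [beta fA_mx]]]]; exists m => d k; apply: (dist_le_dim fA_mx).
Qed.

Lemma dist_of_bad d w : bad (run d w) ->
  exists k, [/\ is_dist d k, (d.2 < k + K)%N & exists2 w1, size w1 = k & bad (run d w1)].
Proof.
move=> dw; have [k [[w1 [w1k bw1]] kmin]] :=
  ex_minimal (P := fun j => exists w, size w = j /\ bad (run d w)) (ex_intro _ w (conj erefl dw)).
exists k; split; last by exists w1.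
  by split=> [|w2 bw2]; [exists w1 | apply: kmin; exists w2].
case: d bw1 {dw kmin} => [[x p] m] [] /=; rewrite runE /= => nK _.
by have /= := crun_ge (p, m) w1; lia.
Qed.

Definition level_word (k : nat) (p : C) (k' : nat) (p' : C) (M : 'M[F]_n) :=
  exists u, [/\ stays_ge 1 (p, k) u, crun (p, k) u = (p', k') & run_mx (p, k) u = M].

Lemma level_word_shift k p k' p' M d : level_word k p k' p' M ->
  exists u, run_mx (p, k + d)%N u = M /\ crun (p, k + d)%N u = (p', k' + d)%N.
Proof.
move=> [u [u1 uk' uM]]; exists u.
have [-> ->] := run_shift_up (l := (k + d)%N) (leqnn 1) (leq_addr d k) u1.
by rewrite uk' uM addKn.
Qed.

(* Cut a run reaching level [l + 2] at its last visit of level [l + 1]. *)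
Lemma reach_level_split x p1 l : reach (init_config A) (x, p1, l.+2) ->
  exists x' q Mu, [/\ reach (init_config A) (x', q, l.+1), level_word 1 q 2 p1 Mu & x = x' *m Mu].
Proof.
move=> [u]; rewrite runE => -[<- up1 ul]; set pn := (p0 A, 0%N).
have [|u1 [u2 [eu u1l u2l]]] := @ascent_split l.+1 u pn; first by rewrite ul /=.
set q := (crun pn u1).1; have qE : crun pn u1 = (q, l.+1) by rewrite -u1l -surjective_pairing.
rewrite qE in u2l; have u21 : stays_ge 1 (q, 1%N) u2.
  by apply: (stays_ge_shift_down (l := l.+1)) => //; rewrite add1n subn1.
have [u2M u2c] := run_shift_up (m := 1%N) (l := l.+1) (leqnn 1) isT u21.
have u2E : crun (q, l.+1) u2 = (p1, l.+2).
  by rewrite -qE -crun_cat -eu [LHS]surjective_pairing up1 ul.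
exists (lam A *m run_mx pn u1), q, (run_mx (q, 1%N) u2); split.
- by exists u1; rewrite /init_config runE qE.
- exists u2; split=> //; move: u2c; rewrite u2E subn1 /=.
  by case: (crun (q, 1%N) u2) => a b [-> lb]; rewrite (_ : b = 2%N) //; lia.
- by rewrite eu run_mx_cat qE u2M mulmxA.
Qed.

(* Cut a run descending from level [l + 2] to at most [l + 1] at its first visit
   of level [l + 1]. *)
Lemma run_level_split p2 l w : ((crun (p2, l.+2) w).2 <= l.+1)%N ->
  exists p' Mv w', [/\ level_word 2 p2 1 p' Mv,
    run_mx (p2, l.+2) w = Mv *m run_mx (p', l.+1) w' & crun (p2, l.+2) w = crun (p', l.+1) w'].
Proof.
move=> wl; have [|v [w' [-> vl v2]]] := @descent_split l.+1 w (p2, l.+2); first by rewrite wl /=.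
have v1 : stays_ge 1 (p2, 2%N) v.
  apply: (stays_ge_shift_down (l := l.+2)) => //; rewrite add1n subn2.
  exact: stays_ge_mono v2.
have [vM vc] := run_shift_up (m := 2%N) (l := l.+2) (leqnn 1) isT v1.
set p' := (crun (p2, 2%N) v).1; have vE : crun (p2, l.+2) v = (p', l.+1).
  by rewrite [LHS]surjective_pairing vl vc.
exists p', (run_mx (p2, 2%N) v), w'; split.
- exists v; split=> //; move: vc; rewrite vE subn2 /p'.
  by case: (crun (p2, 2%N) v) => a b /= [lb]; rewrite (_ : b = 1%N) //; lia.
- by rewrite run_mx_cat vM vE.
- by rewrite crun_cat vE.
Qed.

Local Notation pmx := {ffun C * C -> 'M[F]_n}.

Definition rank1_at (p1 p2 : C) (x : 'rV[F]_n) (y : 'cV[F]_n) : pmx :=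
  [ffun q => if q == (p1, p2) then x^T *m y^T else 0].

(* [x] is the vector of a reachable configuration at level [l] in state [p1];
   [run_mx (p2, l) w *m chi] tests whether the run of [w] from state [p2] ends outside [W]. *)
Definition witness (l : nat) (Y : pmx) := exists x p1 p2 w (chi : 'cV[F]_n),
  [/\ reach (init_config A) (x, p1, l), ((crun (p2, l) w).2 < K)%N,
   forall x', inW (crun (p2, l) w).1 (crun (p2, l) w).2 x' -> (x' *m chi) 0 0 = 0 &
   Y = rank1_at p1 p2 x (run_mx (p2, l) w *m chi)].

Lemma witness_K_gt0 l Y : witness l Y -> (0 < K)%N.
Proof. by move=> [x [p1 [p2 [w [chi [_ + _ _]]]]]]; apply: leq_ltn_trans. Qed.

Definition pump_map (p p' p1 p2 : C) (Mu Mv : 'M[F]_n) (Y : pmx) : pmx :=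
  [ffun q => if q == (p1, p2) then Mu^T *m Y (p, p') *m Mv^T else 0].

Lemma pump_map_linear p p' p1 p2 Mu Mv : linear (pump_map p p' p1 p2 Mu Mv).
Proof.
move=> k Y1 Y2; apply/ffunP=> q; rewrite !ffunE; case: ifP => _; last by rewrite scaler0 addr0.
by rewrite mulmxDr mulmxDl -scalemxAr -scalemxAl.
Qed.

Lemma pump_map_rank1 p p' p1 p2 Mu Mv q1 q2 x y :
  pump_map p p' p1 p2 Mu Mv (rank1_at q1 q2 x y) =
  if (p, p') == (q1, q2) then rank1_at p1 p2 (x *m Mu) (Mv *m y) else 0.
Proof.
apply/ffunP=> q; case: eqP => [[<- <-]|/eqP/negbTE ne]; rewrite !ffunE ?ne.
  by rewrite eqxx; case: (q == _); rewrite // !trmx_mul !mulmxA.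
by case: (q == _); rewrite ?mulmx0 ?mul0mx.
Qed.

Lemma witness_unpump l Y : (K <= l.+1)%N -> witness l.+2 Y ->
  exists p p' p1 p2 Mu Mv Y', [/\ level_word 1 p 2 p1 Mu, level_word 2 p2 1 p' Mv,
    witness l.+1 Y' & Y = pump_map p p' p1 p2 Mu Mv Y'].
Proof.
move=> Kl [x [p1 [p2 [w [chi [rx wK wchi ->]]]]]].
have [x' [q [Mu [rx' up ->]]]] := reach_level_split rx.
have [p' [Mv [w' [down wM wc]]]] := run_level_split (w := w) (ltnW (leq_trans wK Kl)).
exists q, p', p1, p2, Mu, Mv, (rank1_at q p' x' (run_mx (p', l.+1) w' *m chi)); split=> //.
  by exists x', q, p', w', chi; rewrite -wc.
by rewrite pump_map_rank1 eqxx wM mulmxA.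
Qed.

Lemma witness_pump l Y p p' p1 p2 Mu Mv :
  witness l.+1 Y -> level_word 1 p 2 p1 Mu -> level_word 2 p2 1 p' Mv ->
  pump_map p p' p1 p2 Mu Mv Y = 0 \/ witness l.+2 (pump_map p p' p1 p2 Mu Mv Y).
Proof.
move=> [x [q1 [q2 [w [chi [[u0 rx] wK wchi ->]]]]]] up down.
rewrite pump_map_rank1; case: eqP => [[eq1 eq2]|_]; [right; subst | by left].
have [u [uM uc]] := level_word_shift l up; have [v [vM vc]] := level_word_shift l down.
rewrite !add1n !add2n in uM uc vM vc.
exists (x *m Mu), p1, p2, (v ++ w), chi; rewrite crun_cat vc; split=> //.
- by exists (u0 ++ u); rewrite run_cat rx runE uM uc.
- by rewrite run_mx_cat vM vc mulmxA.
Qed.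

Definition witness_span (m : nat) :=
  span_pred (fun Y => exists2 l, (K + m <= l)%N & witness l Y).

(* Every witness above level [K + m + 1] is a pumped witness one level lower, so
   [witness_span m <= witness_span m.+1] transfers one level up. *)
Lemma witness_span_prop m : (forall Y, witness_span m Y -> witness_span m.+1 Y) ->
  forall Y, witness_span m.+1 Y -> witness_span m.+2 Y.
Proof.
move=> inc; apply: span_pred_ind; first exact: span_pred_subspace.
move=> Y [l lm wY]; have K0 := witness_K_gt0 wY.
case: l lm wY => [|[|l]] lm wY; try by lia.
have [|p [p' [p1 [p2 [Mu [Mv [Y' [up down wY' ->]]]]]]]] := witness_unpump _ wY; first lia.
have : witness_span m.+1 Y' by apply/inc/span_pred_gen; exists l.+1 => //; lia.
apply: (span_pred_ind (X := fun Z => witness_span m.+2 (pump_map p p' p1 p2 Mu Mv Z))).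
  exact: subspace_pred_preim (pump_map_linear _ _ _ _ _ _) (span_pred_subspace _).
move=> Y'' [[|l''] l''m wY'']; first by rewrite addnS in l''m.
have [->|wpump] := witness_pump wY'' up down; first by exists [::]; rewrite mem0v.
by apply: span_pred_gen; exists l''.+2 => //; lia.
Qed.

Definition trace_diag (Y : pmx) : F^o := \sum_p \tr (Y (p, p)).

Lemma trace_diag_linear : linear trace_diag.
Proof.
move=> k Y1 Y2; rewrite /trace_diag scaler_sumr -big_split.
by apply: eq_bigr => p _; rewrite !ffunE mxtraceD mxtraceZ.
Qed.

Lemma trace_diag_rank1 p1 p2 x y :
  trace_diag (rank1_at p1 p2 x y) = if p1 == p2 then (x *m y) 0 0 else 0.
Proof.
have tr_outer : \tr (x^T *m y^T) = (x *m y) 0 0.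
  by rewrite -trmx_mul mxtrace_tr mxtrace_mulC /mxtrace big_ord1.
rewrite /trace_diag; case: eqP => [<-|ne].
  rewrite (bigD1 p1) //= big1 ?addr0 => [|p /negbTE pp1]; first by rewrite ffunE eqxx.
  by rewrite ffunE xpair_eqE pp1 mxtrace0.
rewrite big1 // => p _; rewrite ffunE xpair_eqE; case: eqP => [->|] /=; last by rewrite mxtrace0.
by case: eqP => [e|]; [case: ne | rewrite mxtrace0].
Qed.

Lemma witness_of_bad d e : reach (init_config A) d -> reach d e -> bad e ->
  exists Y, witness d.2 Y /\ trace_diag Y != 0.
Proof.
case: d => [[x p] N] rd [w <-]; rewrite runE => -[/= wK nW].
have [chi [chiW chie]] := separating_column (inW_subspace _ _) nW.
exists (rank1_at p p x (run_mx (p, N) w *m chi)); split; first by exists x, p, p, w, chi.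
by rewrite trace_diag_rank1 eqxx mulmxA.
Qed.

Lemma bad_of_witness l Y : witness l Y -> trace_diag Y != 0 ->
  exists x p w, reach (init_config A) (x, p, l) /\ bad (run (x, p, l) w).
Proof.
move=> [x [p1 [p2 [w [chi [rx wK wchi ->]]]]]]; rewrite trace_diag_rank1.
case: ifP => [/eqP e12 xchi|_]; last by rewrite eqxx.
subst p2.
exists x, p1, w; split; rewrite // runE; split=> // /wchi.
by move: xchi; rewrite mulmxA => /negbTE + e; rewrite e eqxx.
Qed.

Lemma dim_pmx : \dim {: pmx} = (K ^ 2)%N.
Proof. by rewrite dimvf /dim /= card_prod dim_matrix /bigK; lia. Qed.

(* The witness spans decrease and stabilise by [\dim pmx = K ^ 2]; a nonzero trace
   forces a generator with nonzero trace at every height. *)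
Lemma high_witness N Y t : (K ^ 2 + K <= N)%N -> witness N Y -> trace_diag Y != 0 ->
  exists l Y', [/\ (K + t <= l)%N, witness l Y' & trace_diag Y' != 0].
Proof.
move=> NK wY trY; apply: NNPP => none; move/negP: trY; apply.
have span_dec m : forall Y, witness_span m.+1 Y -> witness_span m Y.
  by apply: span_pred_mono => Y' [l lm wY']; exists l => //; lia.
have dimN : (\dim {: pmx} <= N - K)%N by rewrite dim_pmx; lia.
have wsY : witness_span (N - K) Y by apply: span_pred_gen; exists N => //; lia.
have := descending_chain_stable (fun m => span_pred_subspace _) span_dec witness_span_prop
  dimN t wsY.
move=> /(span_pred_ind (X := fun Y => trace_diag Y = 0)) trY0; apply/eqP/trY0.
  apply: (subspace_pred_preim (X := fun a : F^o => a = 0) trace_diag_linear).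
  by split=> // [u v -> ->|k u ->]; rewrite ?addr0 ?scaler0.
move=> Y' [l tl wY']; apply/eqP; apply: contra_notT none => trY'.
by exists l, Y'.
Qed.

Definition far_bad_configs : Prop :=
  forall t : nat, exists d e : config A,
    reach (init_config A) d /\ reach d e /\ (e.2 < K)%N /\ ~ inW e.1.2 e.2 e.1.1 /\
    exists k : nat, is_dist d k /\ (t < k)%N.

Definition high_bad_configs : Prop :=
  exists d e : config A,
    reach (init_config A) d /\ reach d e /\ (K ^ 2 + K <= d.2 <= 2 * K ^ 2 + K)%N /\
    (e.2 < K)%N /\ ~ inW e.1.2 e.2 e.1.1.

Lemma far_bad_of_high_bad d e : reach (init_config A) d -> reach d e ->
  (K ^ 2 + K <= d.2)%N -> bad e -> far_bad_configs.
Proof.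
move=> rd de dK be t; have [Y [wY trY]] := witness_of_bad rd de be.
have [l [Y' [tl wY' trY']]] := high_witness t dK wY trY.
have [x [p [w [rx bw]]]] := bad_of_witness wY' trY'.
have [k [dk lk [w1 _ [w1K w1W]]]] := dist_of_bad bw.
exists (x, p, l), (run (x, p, l) w1); split=> //; split; first by exists w1.
do 2!split=> //.
by exists k; split=> //; move: lk => /=; lia.
Qed.

Lemma bigK_gt0 : (0 < nQ A)%N -> (0 < K)%N.
Proof. by move=> n0; rewrite muln_gt0 n0 andbT; apply/card_gt0P; exists (p0 A). Qed.

Lemma not_regular_far_bad : (0 < nQ A)%N -> ~ regular A <-> far_bad_configs.
Proof.
move=> n0; split=> [nreg|far reg]; last first.
  have [T distT] := dist_bounded_of_regular reg.
  have [d [_ [rd [_ [_ [_ [k [dk Tk]]]]]]]] := far T.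
  by have := distT _ _ rd dk; lia.
apply: NNPP => /not_all_ex_not [t nfar]; apply: nreg.
apply: (@regular_of_no_bad_at (t + K)) => [||d rd dT w bw];
  [exact: leq_addl | by rewrite addn_gt0 bigK_gt0 ?orbT |].
have [k [dk dkK [w1 w1k bw1]]] := dist_of_bad bw.
apply: nfar; exists d, (run d w1); case: bw1 => w1K w1W.
split=> //; split; first by exists w1.
by do 2!split=> //; exists k; split=> //; lia.
Qed.

Lemma not_regular_high_bad : (0 < nQ A)%N -> ~ regular A <-> high_bad_configs.
Proof.
move=> n0; split=> [nreg|[d [e [rd [de [/andP [dK _] [eK eW]]]]]]]; last first.
  by apply/(not_regular_far_bad n0)/(far_bad_of_high_bad rd de dK).
apply: NNPP => nhigh; apply: nreg.
apply: (@regular_of_no_bad_at (K ^ 2 + K)) => [||d rd dT w [wK wW]];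
  [exact: leq_addl | by rewrite addn_gt0 bigK_gt0 ?orbT |].
apply: nhigh; exists d, (run d w); split=> //; split; first by exists w.
by rewrite dT leqnn; split=> //; lia.
Qed.

End WeightedODCA.

Unset Implicit Arguments.

Theorem mainTheorem6 (F : fieldType) (S : finType) (A : wODCA F S)
  (hQ : (0 < nQ A)%N) :
  let c := init_config A in
  let K := bigK A in
  (~ regular A <->
   (forall t : nat, exists d e : config A,
      reach c d /\ reach d e /\ (e.2 < K)%N /\ ~ inW e.1.2 e.2 e.1.1 /\
      exists k : nat, is_dist d k /\ (t < k)%N)) /\
  (~ regular A <->
   (exists d e : config A,
      reach c d /\ reach d e /\
      (K ^ 2 + K <= d.2 <= 2 * K ^ 2 + K)%N /\
      (e.2 < K)%N /\ ~ inW e.1.2 e.2 e.1.1)).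
Proof. by split; [apply: not_regular_far_bad | apply: not_regular_high_bad]. Qed.
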